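(* Let $X$ be a shift space and $m\ge1$. The following are equivalent: (i) $X$ is eventually dendric with threshold $m$; (ii) the graph $\mathcal E_n(w)$ is a tree for every $n\ge1$ and every $w\in\mathcal L_{\ge m}(X)$; (iii) there is an integer $n\ge1$ such that $\mathcal E_n(w)$ is a tree for every $w\in\mathcal L_{\ge m}(X)$.
   Context: $A$ is a finite alphabet; a shift space is a closed shift-invariant subset $X\subseteq A^{\mathbb Z}$; $\mathcal L(X)$ is its set of finite factors, $\mathcal L_n(X)=\mathcal L(X)\cap A^n$, $\mathcal L_{\ge n}(X)=\bigcup_{k\ge n}\mathcal L_k(X)$. For $w\in\mathcal L(X)$ and $n\ge1$: $L_n(w)=\{u\in\mathcal L_n(X):uw\in\mathcal L(X)\}$, $R_n(w)=\{v\in\mathcal L_n(X):wv\in\mathcal L(X)\}$, and the extension graph $\mathcal E_n(w)$ is the undirected bipartite graph with vertex set the disjoint union of $L_n(w)$ and $R_n(w)$ and an edge $(u,v)$ iff $uwv\in\mathcal L(X)$. $X$ is eventually dendric with threshold $m$ if $\mathcal E_1(w)$ is a tree for every $w\in\mathcal L_{\ge m}(X)$. *)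

From HB Require Import structures.
From mathcomp Require Import all_boot all_order all_algebra.
Set Implicit Arguments. Unset Strict Implicit. Unset Printing Implicit Defensive.
Import Order.TTheory GRing.Theory Num.Theory.

Definition config (A : finType) := int -> A.

Definition shift (A : finType) (x : config A) : config A := fun i => x (i + 1)%R.

(* closedness in the product topology: x is in X whenever every central
   cylinder [x_{-k} .. x_k] around x meets X *)
Definition closed_set (A : finType) (X : config A -> Prop) : Prop :=
  forall x : config A,
    (forall k : nat, exists y, X y /\
        forall i : int, (- (k%:Z) <= i)%R -> (i <= k%:Z)%R -> y i = x i) ->
    X x.

(* shift invariance: sigma(X) = X (sigma is a bijection) *)
Definition shift_invariant (A : finType) (X : config A -> Prop) : Prop :=
  forall x, X x <-> X (shift x).

Definition shift_space (A : finType) (X : config A -> Prop) : Prop :=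
  closed_set X /\ shift_invariant X.

Definition window (A : finType) (x : config A) (i : int) (n : nat) : seq A :=
  mkseq (fun k => x (i + k%:Z)%R) n.

Definition lang (A : finType) (X : config A -> Prop) (w : seq A) : Prop :=
  exists x i, X x /\ w = window x i (size w).

Definition lang_ge (A : finType) (X : config A -> Prop) (m : nat) (w : seq A) : Prop :=
  lang X w /\ m <= size w.

Definition Lext (A : finType) (X : config A -> Prop) (n : nat) (w u : seq A) : Prop :=
  size u = n /\ lang X u /\ lang X (u ++ w).
Definition Rext (A : finType) (X : config A -> Prop) (n : nat) (w v : seq A) : Prop :=
  size v = n /\ lang X v /\ lang X (w ++ v).

(* Undirected graphs given by a vertex predicate S and a symmetric edge
   relation E on a type V. *)
Record graph (V : Type) := Graph { vert : V -> Prop; edge : V -> V -> Prop }.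

Fixpoint walk (V : Type) (E : V -> V -> Prop) (x : V) (p : seq V) : Prop :=
  match p with
  | [::] => True
  | y :: p' => E x y /\ walk E y p'
  end.

Definition connected (V : eqType) (G : graph V) : Prop :=
  forall x y, vert G x -> vert G y ->
    exists p, (forall z, z \in p -> vert G z) /\ walk (edge G) x p /\ last x p = y.

Definition acyclic (V : eqType) (G : graph V) : Prop :=
  forall (c0 : V) (c' : seq V), uniq (c0 :: c') -> 2 <= size c' ->
    (forall z, z \in c0 :: c' -> vert G z) ->
    ~ walk (edge G) c0 (rcons c' c0).

Definition is_tree (V : eqType) (G : graph V) : Prop :=
  (exists x, vert G x) /\ connected G /\ acyclic G.

(* Extension graph E_n(w): vertices inl u (u in L_n(w)) and inr v
   (v in R_n(w)); an (undirected) edge between inl u and inr v iff uwv in L(X). *)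
Definition ext_graph (A : finType) (X : config A -> Prop) (n : nat) (w : seq A)
  : graph (seq A + seq A)%type :=
  Graph (fun z => match z with inl u => Lext X n w u | inr v => Rext X n w v end)
        (fun z1 z2 => match z1, z2 with
           | inl u, inr v | inr v, inl u =>
               Lext X n w u /\ Rext X n w v /\ lang X (u ++ w ++ v)
           | _, _ => False end).

Definition eventually_dendric (A : finType) (X : config A -> Prop) (m : nat) : Prop :=
  forall w, lang_ge X m w -> is_tree (ext_graph X 1 w).

(* A graph is a tree iff it is nonempty, connected, and each of its edges is a
   bridge.  Lengthening the right contexts by one letter, [E_{k,l+1}(w)]
   fibres over [E_{k,l}(w)]: each right vertex [t] is replaced by a copy of
   [E_{k,1}(wt)], glued along the left vertices.  Connectivity and the bridge
   property pass from the base and the fibres to the total graph, and back from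
   the total graph to the base (for bridges, given connected fibres).  Reversing
   words exchanges left and right contexts, so trees [E_1(w)] for all long [w]
   give trees [E_{k,l}(w)] for all [k, l >= 1], and trees [E_n(w)] give trees
   [E_1(w)]. *)

From mathcomp Require Import all_boot all_order all_algebra.
From Stdlib Require Import Relations Classical.
Set Implicit Arguments. Unset Strict Implicit. Unset Printing Implicit Defensive.

(** * Reachability, forests and trees *)

Section Reachability.
Variable V : Type.
Implicit Types (G : graph V) (x y z : V).

Definition adj G x y := vert G x /\ vert G y /\ edge G x y.
Definition reach G := clos_refl_trans V (adj G).

Definition remove_edge G x y :=
  Graph (vert G) (fun a b => edge G a b /\ (a, b) <> (x, y) /\ (a, b) <> (y, x)).
Definition restrict G (P : V -> Prop) := Graph (fun z => vert G z /\ P z) (edge G).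

Definition all_reachable G := forall x y, vert G x -> vert G y -> reach G x y.
(* Every edge is a bridge; for symmetric irreflexive graphs this is acyclicity. *)
Definition forest G :=
  forall x y, vert G x -> vert G y -> edge G x y -> ~ reach (remove_edge G x y) x y.
Definition tree G := (exists x, vert G x) /\ all_reachable G /\ forest G.

Lemma reach_refl G x : reach G x x.
Proof. exact: rt_refl. Qed.

Lemma reach_step G x y : vert G x -> vert G y -> edge G x y -> reach G x y.
Proof. by move=> *; apply: rt_step. Qed.

Lemma reach_trans G x y z : reach G x y -> reach G y z -> reach G x z.
Proof. exact: rt_trans. Qed.

Lemma reach_invariant G (S : V -> Prop) :
  (forall a b, S a -> vert G a -> vert G b -> edge G a b -> S b) ->
  forall x y, S x -> reach G x y -> S y.
Proof.
move=> HS x y Sx rxy; elim: rxy Sx => [a b [Va [Vb Eab]] Sa|//|a b c _ IH1 _ IH2 Sa].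
- exact: HS Sa Va Vb Eab.
- exact: IH2 (IH1 Sa).
Qed.

Lemma reach_vert G x y : reach G x y -> x = y \/ vert G y.
Proof.
apply: (reach_invariant (S := fun z => x = z \/ vert G z)); last by left.
by move=> a b _ _ Vb _; right.
Qed.

Lemma reach_sym G : (forall a b, edge G a b -> edge G b a) ->
  forall x y, reach G x y -> reach G y x.
Proof.
move=> Esym x y; elim=> [a b [Va [Vb /Esym Eba]]| a | a b c _ Hba _ Hcb].
- exact: reach_step.
- exact: reach_refl.
- exact: reach_trans Hcb Hba.
Qed.

Lemma remove_edge_sym G x y : (forall a b, edge G a b -> edge G b a) ->
  forall a b, edge (remove_edge G x y) a b -> edge (remove_edge G x y) b a.
Proof.
move=> Esym a b [/Esym Eba [Nxy Nyx]]; split=> //.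
by split=> -[Eb Ea]; [apply: Nyx|apply: Nxy]; rewrite Ea Eb.
Qed.

Lemma reach_last_edge G x y : reach G x y -> x <> y ->
  exists z, vert G z /\ vert G y /\ edge G z y /\
    reach (restrict G (fun v => v <> y)) x z.
Proof.
move=> rxy Nxy; apply: NNPP => Hn.
have : reach (restrict G (fun v => v <> y)) x y.
  apply: (reach_invariant (S := reach (restrict G (fun v => v <> y)) x)) rxy;
    last exact: reach_refl.
  move=> a b rxa Va Vb Eab; have [Eby|Nby] := classic (b = y).
    by subst b; case: Hn; exists a.
  have Nay : a <> y by case: (reach_vert rxa) => [<-|[]].
  by apply: reach_trans rxa _; apply: reach_step.
by case/reach_vert => [/Nxy|[_ []]].
Qed.

End Reachability.

Lemma reach_map V V' (G : graph V) (G' : graph V') (h : V -> V') :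
  (forall a b, vert G a -> vert G b -> edge G a b ->
     vert G' (h a) /\ vert G' (h b) /\ edge G' (h a) (h b)) ->
  forall x y, reach G x y -> reach G' (h x) (h y).
Proof.
move=> Hh x y; elim=> [a b [Va [Vb Eab]]| a | a b c _ Hab _ Hbc].
- by have [? [? ?]] := Hh a b Va Vb Eab; apply: reach_step.
- exact: reach_refl.
- exact: reach_trans Hab Hbc.
Qed.

Lemma reach_mono V (G G' : graph V) :
  (forall a b, vert G a -> vert G b -> edge G a b ->
     vert G' a /\ vert G' b /\ edge G' a b) ->
  forall x y, reach G x y -> reach G' x y.
Proof. exact: (reach_map (h := id)). Qed.

Lemma forest_neighbours_eq V (G : graph V) (r x y : V) : forest G ->
  vert G x -> vert G r -> edge G x r -> edge G y r ->
  reach (restrict G (fun z => z <> r)) x y -> x = y.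
Proof.
move=> forG Vx Vr Exr Eyr rxy; apply: NNPP => Nxy.
have [Vy Nyr] : vert G y /\ y <> r by case: (reach_vert rxy) => [/Nxy|].
apply: (forG x r Vx Vr Exr); apply: reach_trans (_ : reach _ y r).
- apply: reach_mono rxy => a b [Va Nar] [Vb Nbr] Eab.
  by do !split=> //; case=> *; [apply: Nbr|apply: Nar].
- by apply: reach_step => //; do !split=> //; case=> *; [apply: Nxy|apply: Nyr].
Qed.

Section Walks.
Variable V : eqType.
Implicit Types (G : graph V) (E : V -> V -> Prop).

Lemma walk_cat E x s t : walk E x (s ++ t) <-> walk E x s /\ walk E (last x s) t.
Proof. by elim: s x => [|y s IH] x /=; [tauto|rewrite IH; tauto]. Qed.

Lemma walk_rcons E x s z : walk E x (rcons s z) <-> walk E x s /\ E (last x s) z.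
Proof. by rewrite -cats1 walk_cat /=; tauto. Qed.

Lemma walk_mono E E' x p : (forall a b, E a b -> E' a b) -> walk E x p -> walk E' x p.
Proof. by move=> EE'; elim: p x => [|y p IH] x //= [/EE' ? /IH ?]. Qed.

Lemma walk_reach G x p : vert G x -> (forall z, z \in p -> vert G z) ->
  walk (edge G) x p -> reach G x (last x p).
Proof.
elim: p x => [|y p IH] x Vx Vp /=; first by move=> _; apply: reach_refl.
have Vy : vert G y by apply: Vp; rewrite inE eqxx.
case=> Exy Hw; apply: reach_trans (reach_step Vx Vy Exy) _.
by apply: IH => // z pz; apply: Vp; rewrite inE pz orbT.
Qed.

Lemma reach_uniq_walk G x y : (forall a, ~ edge G a a) -> reach G x y ->
  exists p, [/\ uniq (x :: p), forall z, z \in p -> vert G z,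
    walk (edge G) x p & last x p = y].
Proof.
move=> irr /clos_rt_rt1n_iff rxy; elim: rxy => [a|a b c [Va [Vb Eab]] _ [p [up Vp wp lp]]].
  by exists [::].
have [abp|Nabp] := boolP (a \in b :: p); last first.
  exists (b :: p); split=> //; first by rewrite cons_uniq Nabp.
  by move=> z; rewrite inE => /orP [/eqP ->|/Vp].
have ap : a \in p.
  by move: abp; rewrite inE => /orP [/eqP Eba|//]; subst b; case: (irr a).
case/splitPr: ap up Vp wp lp => r q up Vp wp lp.
exists q; split.
- by move: up; rewrite /= cat_uniq => /and3P [_ _ /andP [_]].
- by move=> z qz; apply: Vp; rewrite mem_cat inE qz !orbT.
- by case/walk_cat: wp => _ [].
- by rewrite -lp last_cat.
Qed.

Lemma connected_iff_all_reachable G : (forall a, ~ edge G a a) ->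
  connected G <-> all_reachable G.
Proof.
move=> irr; split=> conG x y Vx Vy.
- by case: (conG x y Vx Vy) => p [Vp [wp <-]]; apply: walk_reach.
- by have [p [_ Vp wp lp]] := reach_uniq_walk irr (conG x y Vx Vy); exists p.
Qed.

Lemma acyclic_forest G : (forall a b, edge G a b -> edge G b a) ->
  (forall a, ~ edge G a a) -> acyclic G -> forest G.
Proof.
move=> Esym irr acG x y Vx Vy Exy rxy.
have irr' a : ~ edge (remove_edge G x y) a a by case=> /irr.
have [[|z1 [|z2 p]] [up Vp wp lp]] := reach_uniq_walk irr' rxy.
- by rewrite /= in lp; subst y; apply: (irr x).
- by rewrite /= in lp; subst z1; case: wp => -[_ []].
- apply: (acG x [:: z1, z2 & p] up) => //.
    by move=> z; rewrite inE => /orP [/eqP ->|/Vp].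
  apply/walk_rcons; split; last by rewrite lp; apply: Esym.
  by apply: walk_mono wp => a b [].
Qed.

Lemma forest_acyclic G : (forall a b, edge G a b -> edge G b a) ->
  forest G -> acyclic G.
Proof.
move=> Esym forG c0 [|c1 c''] // + + Vc /= [E01 /walk_rcons [wc El]].
case: c'' Vc wc El => [|z t] // Vc wc El; rewrite !cons_uniq => /and3P [N0 N1 _] _.
set y := last c1 (z :: t) in El.
have yt : y \in z :: t by rewrite /y /= mem_last.
have Vz a : a \in c1 :: z :: t -> vert G a by move=> az; apply: Vc; rewrite inE az orbT.
have V0 : vert G c0 by apply: Vc; rewrite inE eqxx.
have V1 : vert G c1 by apply: Vz; rewrite inE eqxx.
have Vy : vert G y by apply: Vz; rewrite inE yt orbT.
have Ny0 : y <> c0 by move=> E; move: N0; rewrite -E inE yt orbT.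
have Ny1 : y <> c1 by move=> E; move: N1; rewrite -E yt.
have off0 a : a \in c1 :: z :: t -> vert (restrict G (fun v => v <> c0)) a.
  by move=> az; split; [apply: Vz|move=> E; move: N0; rewrite -E az].
have r1y : reach (restrict G (fun v => v <> c0)) c1 y.
  have := @walk_reach (restrict G (fun v => v <> c0)) c1 (z :: t).
  apply; [by apply: off0; rewrite inE eqxx | | exact: wc].
  by move=> a az; apply: off0; rewrite inE az orbT.
apply: (forG c0 c1 V0 V1 E01); apply: reach_sym; first exact: remove_edge_sym.
apply: reach_trans (_ : reach _ y _); last first.
  by apply: reach_step => //; split=> //; split; case=> E *; [exact: Ny0 E|exact: Ny1 E].
apply: reach_mono r1y => a b [Va Na] [Vb Nb] Eab.
by do !split=> //; case.
Qed.

Lemma is_tree_iff_tree G : (forall a b, edge G a b -> edge G b a) ->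
  (forall a, ~ edge G a a) -> is_tree G <-> tree G.
Proof.
move=> Esym irr; rewrite /is_tree /tree connected_iff_all_reachable //.
by split=> -[ne [con ac]]; do !split=> //; [apply: acyclic_forest|apply: forest_acyclic].
Qed.

End Walks.

(** * Graph isomorphisms *)

Section Isomorphism.
Variables (V V' : Type) (G : graph V) (G' : graph V') (f : V -> V') (g : V' -> V).

Record graph_iso : Prop := GraphIso {
  iso_vert : forall x, vert G x -> vert G' (f x);
  iso_vert_inv : forall y, vert G' y -> vert G (g y);
  iso_cancel : forall x, vert G x -> g (f x) = x;
  iso_cancel_inv : forall y, vert G' y -> f (g y) = y;
  iso_edge : forall x y, vert G x -> vert G y -> edge G x y -> edge G' (f x) (f y);
  iso_edge_inv : forall x y, vert G' x -> vert G' y -> edge G' x y ->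
    edge G (g x) (g y) }.

Hypothesis iso : graph_iso.

Lemma all_reachable_iso : all_reachable G -> all_reachable G'.
Proof.
move=> conG x y Vx Vy; rewrite -(iso_cancel_inv iso Vx) -(iso_cancel_inv iso Vy).
apply: (reach_map (h := f)); last by apply: conG; apply: (iso_vert_inv iso).
by move=> a b Va Vb Eab; do !split; [apply: iso_vert..|apply: iso_edge].
Qed.

Lemma forest_iso : forest G -> forest G'.
Proof.
move=> forG x y Vx Vy Exy rxy.
apply: (forG (g x) (g y)); [exact: iso_vert_inv..|exact: iso_edge_inv|].
apply: (reach_map (h := g)) rxy => a b /= Va Vb [Eab [Nxy Nyx]].
have inj_g c d : vert G' c -> vert G' d -> g c = g d -> c = d.
  by move=> Vc Vd Egcd; rewrite -(iso_cancel_inv iso Vc) Egcd iso_cancel_inv.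
do !split; [exact: iso_vert_inv..|exact: iso_edge_inv| |].
- by case=> /(inj_g _ _ Va Vx) Eax /(inj_g _ _ Vb Vy) Eby; apply: Nxy; rewrite Eax Eby.
- by case=> /(inj_g _ _ Va Vy) Eay /(inj_g _ _ Vb Vx) Ebx; apply: Nyx; rewrite Eay Ebx.
Qed.

Lemma tree_iso : tree G -> tree G'.
Proof.
case=> -[x Vx] [conG forG]; split; first by exists (f x); apply: iso_vert.
by split; [apply: all_reachable_iso|apply: forest_iso].
Qed.

End Isomorphism.

Lemma graph_iso_sym V V' (G : graph V) (G' : graph V') f g :
  graph_iso G G' f g -> graph_iso G' G g f.
Proof. by case=> *; split. Qed.

Lemma graph_iso_trans V1 V2 V3 (G1 : graph V1) (G2 : graph V2) (G3 : graph V3)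
    f1 g1 f2 g2 :
  graph_iso G1 G2 f1 g1 -> graph_iso G2 G3 f2 g2 ->
  graph_iso G1 G3 (f2 \o f1) (g1 \o g2).
Proof.
case=> V1f V2g K1 K1' E1f E2g [V2f V3g K2 K2' E2f E3g]; split=> /=.
- by move=> x /V1f /V2f.
- by move=> y /V3g /V2g.
- by move=> x Vx; rewrite K2 ?K1 //; apply: V1f.
- by move=> y Vy; rewrite K1' ?K2' //; apply: V3g.
- by move=> x y Vx Vy Exy; apply: E2f (E1f _ _ Vx Vy Exy); apply: V1f.
- by move=> x y Vx Vy Exy; apply: E2g (E3g _ _ Vx Vy Exy); apply: V3g.
Qed.

Definition isomorphic V V' (G : graph V) (G' : graph V') :=
  exists f g, graph_iso G G' f g.

Lemma isomorphic_sym V V' (G : graph V) (G' : graph V') :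
  isomorphic G G' -> isomorphic G' G.
Proof. by case=> f [g iso]; exists g, f; apply: graph_iso_sym. Qed.

(** * Bipartite graphs and their fibrations *)

Section Bipartite.
Variables (U T : Type) (L : U -> Prop) (R : T -> Prop) (e : U -> T -> Prop).

Definition bipartite : graph (U + T) :=
  Graph (fun z => match z with inl u => L u | inr v => R v end)
        (fun z1 z2 => match z1, z2 with
           | inl u, inr v | inr v, inl u => e u v | _, _ => False end).

Lemma bipartite_sym a b : edge bipartite a b -> edge bipartite b a.
Proof. by case: a b => [a|a] [b|b]. Qed.

Lemma bipartite_irr a : ~ edge bipartite a a.
Proof. by case: a => a []. Qed.

Lemma forest_bipartite :
  (forall u t, e u t -> ~ reach (remove_edge bipartite (inl u) (inr t)) (inl u) (inr t)) ->
  forest bipartite.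
Proof.
move=> Hb [u|t] [u'|t'] //= Vu Vt Eut; first exact: Hb.
move=> rtu; apply: (Hb u' t Eut); apply: reach_sym.
  by apply: remove_edge_sym; apply: bipartite_sym.
by apply: reach_mono rtu => a b Va Vb [Eab [N1 N2]]; do !split.
Qed.

Hypotheses (edge_vert : forall u t, e u t -> L u /\ R t)
  (right_vert_edge : forall t, R t -> exists u, e u t).

Lemma all_reachable_bipartite :
  (forall u u', L u -> L u' -> reach bipartite (inl u) (inl u')) ->
  all_reachable bipartite.
Proof.
move=> reachL.
have near_left z : vert bipartite z -> exists u, [/\ L u,
    reach bipartite z (inl u) & reach bipartite (inl u) z].
  case: z => [u|t] /= Vz; first by exists u; split=> //; apply: reach_refl.
  have [u Eut] := right_vert_edge Vz; have [Lu _] := edge_vert Eut.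
  by exists u; split=> //; apply: reach_step.
move=> x y Vx Vy.
have [u [Lu rxu _]] := near_left x Vx; have [u' [Lu' _ ru'y]] := near_left y Vy.
exact: reach_trans rxu (reach_trans (reachL u u' Lu Lu') ru'y).
Qed.

End Bipartite.

Definition swap_sides U T (z : U + T) : T + U :=
  match z with inl u => inr u | inr t => inl t end.

Lemma bipartite_flip_iso U T (L : U -> Prop) (R : T -> Prop) (e : U -> T -> Prop) :
  graph_iso (bipartite L R e) (bipartite R L (fun t u => e u t))
    (@swap_sides U T) (@swap_sides T U).
Proof. by split; case=> [?|?] //; case. Qed.

Section BipartiteIso.
Variables (U T U' T' : Type) (L : U -> Prop) (R : T -> Prop) (e : U -> T -> Prop)
  (L' : U' -> Prop) (R' : T' -> Prop) (e' : U' -> T' -> Prop)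
  (fl : U -> U') (gl : U' -> U) (fr : T -> T') (gr : T' -> T).
Hypotheses (fl_vert : forall u, L u -> L' (fl u)) (gl_vert : forall u, L' u -> L (gl u))
  (fr_vert : forall t, R t -> R' (fr t)) (gr_vert : forall t, R' t -> R (gr t))
  (flK : forall u, L u -> gl (fl u) = u) (glK : forall u, L' u -> fl (gl u) = u)
  (frK : forall t, R t -> gr (fr t) = t) (grK : forall t, R' t -> fr (gr t) = t)
  (f_edge : forall u t, L u -> R t -> e u t -> e' (fl u) (fr t))
  (g_edge : forall u t, L' u -> R' t -> e' u t -> e (gl u) (gr t)).

Lemma bipartite_iso :
  graph_iso (bipartite L R e) (bipartite L' R' e')
    (fun z => match z with inl u => inl (fl u) | inr t => inr (fr t) end)
    (fun z => match z with inl u => inl (gl u) | inr t => inr (gr t) end).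
Proof.
split.
- by case=> [u|t] /=; [apply: fl_vert|apply: fr_vert].
- by case=> [u|t] /=; [apply: gl_vert|apply: gr_vert].
- by case=> [u|t] /= V; rewrite ?flK ?frK.
- by case=> [u|t] /= V; rewrite ?glK ?grK.
- by case=> [u|t] [u'|t'] //= ? ?; apply: f_edge.
- by case=> [u|t] [u'|t'] //= ? ?; apply: g_edge.
Qed.

End BipartiteIso.

Definition on_right U T (P : T -> Prop) (z : U + T) : Prop :=
  if z is inr t then P t else True.

Lemma on_right_neq U T (t : T) (z : U + T) : z <> inr t -> on_right (fun t' => t' <> t) z.
Proof. by case: z => //= t' Nt Et; apply: Nt; rewrite Et. Qed.

Section Fibration.
Variables (U T T' : Type) (L : U -> Prop) (R : T -> Prop) (e : U -> T -> Prop)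
  (R' : T' -> Prop) (e' : U -> T' -> Prop) (pi : T' -> T).
Hypotheses (edge_vert : forall u t, e u t -> L u /\ R t)
  (edge_vert' : forall u s, e' u s -> L u /\ R' s)
  (proj_edge : forall u s, e' u s -> e u (pi s))
  (proj_vert : forall s, R' s -> R (pi s))
  (lift_edge : forall u t, e u t -> exists s, pi s = t /\ e' u s)
  (right_vert_edge : forall t, R t -> exists u, e u t)
  (right_vert_edge' : forall s, R' s -> exists u, e' u s).

Local Notation G := (bipartite L R e).
Local Notation G' := (bipartite L R' e').

Definition fiber t := bipartite (fun u => e u t) (fun s => R' s /\ pi s = t) e'.

(* A step of [G] through a right vertex [t] is crossed in [G'] inside the
   connected fibre over [t]. *)
Lemma reach_lift (P : T -> Prop) (conF : forall t, R t -> all_reachable (fiber t)) a z :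
  reach (restrict G (on_right P)) (inl a) z ->
  match z with
  | inl u => reach (restrict G' (on_right (fun s => P (pi s)))) (inl a) (inl u)
  | inr t => forall s, R' s -> pi s = t ->
      reach (restrict G' (on_right (fun s => P (pi s)))) (inl a) (inr s)
  end.
Proof.
set G'P := restrict G' _ => raz.
apply: (reach_invariant (S := fun z => match z with
  | inl u => reach G'P (inl a) (inl u)
  | inr t => forall s, R' s -> pi s = t -> reach G'P (inl a) (inr s) end)) raz;
  last exact: reach_refl.
move=> [x|t] [x'|t'] rax [Va Pa] [Vb Pb] /= Ext //.
- move=> s R's pst; apply: reach_trans rax _.
  apply: reach_mono (conF t' Vb (inl x) (inr s) Ext (conj R's pst)).
  move=> [u|s1] [u'|s2] + + /= Eab //.
  + move=> eut [R's2 ps2]; have [Lu _] := edge_vert eut.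
    by do !split=> //; rewrite /= ps2.
  + move=> [R's1 ps1] eu't; have [Lu' _] := edge_vert eu't.
    by do !split=> //; rewrite /= ps1.
- have [s [pst ets]] := lift_edge Ext; have [Lx' R's] := edge_vert' ets.
  apply: reach_trans (rax s R's pst) _.
  by apply: reach_step => //=; split=> //; rewrite pst.
Qed.

Lemma all_reachable_lift : all_reachable G ->
  (forall t, R t -> all_reachable (fiber t)) -> all_reachable G'.
Proof.
move=> conG conF; apply: all_reachable_bipartite => // u u' Lu Lu'.
have ruu' : reach (restrict G (on_right (fun _ => True))) (inl u) (inl u').
  by apply: reach_mono (conG (inl u) (inl u') Lu Lu') => -[?|?] [?|?] Va Vb Eab.
by apply: reach_mono (reach_lift conF ruu') => a b [Va _] [Vb _] Eab.
Qed.

Lemma all_reachable_proj : all_reachable G' -> all_reachable G.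
Proof.
move=> conG'; apply: all_reachable_bipartite => // u u' Lu Lu'.
pose h (z : U + T') : U + T := match z with inl u => inl u | inr s => inr (pi s) end.
apply: (reach_map (h := h) _ (conG' (inl u) (inl u') Lu Lu')) => -[x|s] [x'|s'] //= Vx Vs Exs.
- by do !split=> //; [apply: proj_vert|apply: proj_edge].
- by do !split=> //; [apply: proj_vert|apply: proj_edge].
Qed.

(* A cycle of [G] through the edge [a r] lifts: its part away from [r] lifts by
   [reach_lift], and it closes up inside the connected fibre over [r]. *)
Lemma forest_proj : forest G' ->
  (forall t, R t -> all_reachable (fiber t)) -> forest G.
Proof.
move=> forG' conF; apply: forest_bipartite => a r ear rar.
have [La Rr] := edge_vert ear.
have Nar : inl a <> inr r :> U + T by [].
have [[x|t] [_ [_ [[exr [Nxa _]] rax]]]] := reach_last_edge rar Nar; last by [].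
have rax_off : reach (restrict G (on_right (fun t => t <> r))) (inl a) (inl x).
  apply: reach_mono rax => b c [Vb Nb] [Vc Nc] [Ebc _].
  by do !split=> //; apply: on_right_neq.
have rax' := reach_lift conF rax_off; rewrite /= in rax'.
have Nxa' : inl x <> inl a :> U + T' by move=> [Exa]; apply: Nxa; rewrite Exa.
have [[u|s] [Vs [_ [eas rxs]]]] := reach_last_edge (conF r Rr (inl x) (inl a) exr ear) Nxa'.
  by [].
have [R's psr] := Vs.
apply: (forG' (inl a) (inr s) La R's eas); apply: reach_trans (_ : reach _ _ (inl x)) _.
- apply: reach_mono rax' => b c [Vb Nb] [Vc Nc] Ebc; do !split=> //.
  + by case=> _ Ec; move: Nc; rewrite Ec => /(_ psr).
  + by case=> Eb _; move: Nb; rewrite Eb => /(_ psr).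
- apply: reach_mono rxs => -[u|s1] [u'|s2] [Vb Nb] [Vc Nc] //= Ebc.
  + have [[Lu _] [R's2 _]] := (edge_vert Vb, Vc).
    by do !split=> //; case=> Eua *; apply: Nb; rewrite Eua.
  + have [[R's1 _] [Lu' _]] := (Vb, edge_vert Vc).
    by do !split=> //; case=> _ Eua; apply: Nc; rewrite Eua.
Qed.

Lemma forest_lift : forest G ->
  (forall t, R t -> forest (fiber t)) -> forest G'.
Proof.
move=> forG forF; apply: forest_bipartite => a s eas ras.
set r := pi s; have ear : e a r := proj_edge eas.
have [La R's] := edge_vert' eas; have Rr : R r := proj_vert R's.
set Goff := restrict G (fun z => z <> inr r).
set Fcut := remove_edge (fiber r) (inl a) (inr s).
have back_to_fiber b x : reach Fcut (inl a) (inl b) -> reach Goff (inl b) (inl x) ->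
    e x r -> b = x.
  move=> rab rbx exr; have ebr : e b r by case: (reach_vert rab) => [[<-]|].
  have Lb := (edge_vert ebr).1.
  by case: (forest_neighbours_eq (r := inr r) (x := inl b) (y := inl x) forG Lb Rr ebr exr rbx).
(* Projected to [G], a path from [a] avoiding the edge [a s] can come back to [r]
   only through the component of [a] in the fibre over [r] with [a s] cut. *)
pose near_fiber z := exists2 b, reach Fcut (inl a) (inl b) & reach Goff (inl b) z.
pose I z := match z with
  | inl x => near_fiber (inl x)
  | inr s' => pi s' <> r /\ near_fiber (inr (pi s')) \/ pi s' = r /\ reach Fcut (inl a) (inr s')
  end.
have : I (inr s).
  apply: (reach_invariant (S := I)) ras; last by exists a; apply: reach_refl.
  move=> [x|s1] [x'|s2] Ia Va Vb [/= Ee [N1 N2]] //.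
  - have [b rab rbx] := Ia; have [Lx R's2] := edge_vert' Ee.
    have [psr|Npsr] := classic (pi s2 = r).
      have exr : e x r by rewrite -psr; apply: proj_edge.
      have Ebx := back_to_fiber b x rab rbx exr; subst x.
      by right; split=> //; apply: reach_trans rab (reach_step _ _ _).
    left; split=> //; exists b => //; apply: reach_trans rbx (reach_step _ _ _) => //=.
    + by split; [apply: proj_vert|move=> [/Npsr]].
    + exact: proj_edge.
  - have [Lx' R's1] := edge_vert' Ee.
    case: Ia => [[Npsr [b rab rbs]]|[psr ras1]].
      exists b => //; apply: reach_trans rbs (reach_step _ _ _) => //=.
      + by split; [apply: proj_vert|move=> [/Npsr]].
      + exact: proj_edge.
    exists x'; last exact: reach_refl.
    apply: reach_trans ras1 (reach_step _ _ _) => //=; rewrite -psr.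
    exact: proj_edge.
case=> [[]|[_ ras']] //; exact: forF r Rr (inl a) (inr s) ear (conj R's erefl) eas ras'.
Qed.

End Fibration.

(** * Extension graphs of a factorial extendable language *)

Section ExtensionGraphs.
Variable A : Type.
Implicit Types (P : seq A -> Prop) (u v w s t : seq A).

Record factorial_extendable P : Prop := FactorialExtendable {
  prefix_closed : forall u v, P (u ++ v) -> P u;
  suffix_closed : forall u v, P (u ++ v) -> P v;
  left_extendable : forall w n, P w -> exists2 u, size u = n & P (u ++ w);
  right_extendable : forall w n, P w -> exists2 v, size v = n & P (w ++ v) }.

Definition left_ext P k w u := size u = k /\ P u /\ P (u ++ w).
Definition right_ext P l w v := size v = l /\ P v /\ P (w ++ v).
Definition ext_edge P k l w u v :=
  left_ext P k w u /\ right_ext P l w v /\ P (u ++ w ++ v).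
(* [E_n(w)] is [lr_ext_graph P n n w]; left and right lengths are decoupled to
   grow one side at a time. *)
Definition lr_ext_graph P k l w :=
  bipartite (left_ext P k w) (right_ext P l w) (ext_edge P k l w).

Section OneSideGrowth.
Variables (P : seq A -> Prop) (feP : factorial_extendable P) (k : nat) (w : seq A).

Lemma take_closed x s n : P (x ++ s) -> P (x ++ take n s).
Proof. by rewrite -{1}(cat_take_drop n s) catA => /(prefix_closed feP). Qed.

Lemma ext_edge_vert l u v :
  ext_edge P k l w u v -> left_ext P k w u /\ right_ext P l w v.
Proof. by case=> ? []. Qed.

Lemma right_ext_take l s : right_ext P l.+1 w s -> right_ext P l w (take l s).
Proof.
case=> [sz [Ps Pws]]; split; first by rewrite size_take sz ltnSn.
by split; [apply: (take_closed (x := [::]))|apply: take_closed].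
Qed.

Lemma ext_edge_take l u s : ext_edge P k l.+1 w u s -> ext_edge P k l w u (take l s).
Proof.
case=> [Lu [Rs Puws]]; split=> //; split; first exact: right_ext_take.
by rewrite catA; apply: take_closed; rewrite -catA.
Qed.

Lemma ext_edge_lift l u t :
  ext_edge P k l w u t -> exists s, take l s = t /\ ext_edge P k l.+1 w u s.
Proof.
case=> [Lu [[szt _] Puwt]]; have [b szb Puwtb] := right_extendable feP 1 Puwt.
rewrite -!catA in Puwtb.
exists (t ++ b); split; first by rewrite -szt take_size_cat.
do !split=> //; first by rewrite size_cat szt szb addn1.
- by move: Puwtb; rewrite catA => /(suffix_closed feP).
- by move: Puwtb => /(suffix_closed feP).
Qed.

Lemma right_ext_edge l t : right_ext P l w t -> exists u, ext_edge P k l w u t.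
Proof.
case=> [szt [Pt Pwt]]; have [u szu Puwt] := left_extendable feP k Pwt.
exists u; do !split=> //; first exact: prefix_closed Puwt.
by move: Puwt; rewrite catA => /(prefix_closed feP).
Qed.

Local Notation fiber_at l :=
  (fiber (ext_edge P k l w) (right_ext P l.+1 w) (ext_edge P k l.+1 w) (take l)).

Lemma fiber_ext_iso l t : right_ext P l w t ->
  graph_iso (lr_ext_graph P k 1 (w ++ t)) (fiber_at l t)
    (fun z => match z with inl u => inl u | inr b => inr (t ++ b) end)
    (fun z => match z with inl u => inl u | inr s => inr (drop l s) end).
Proof.
move=> [szt [Pt Pwt]].
have grow_left u : left_ext P k (w ++ t) u -> ext_edge P k l w u t.
  move=> [szu [Pu Puwt]]; do !split=> //.
  by move: Puwt; rewrite catA => /(prefix_closed feP).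
have shrink_left u : ext_edge P k l w u t -> left_ext P k (w ++ t) u.
  by move=> [[szu [Pu _]] [_ Puwt]].
have grow_right b : right_ext P 1 (w ++ t) b ->
    right_ext P l.+1 w (t ++ b) /\ take l (t ++ b) = t.
  move=> [szb [Pb Pwtb]]; rewrite -szt take_size_cat //.
  do !split=> //; first by rewrite size_cat szt szb addn1.
  + by move: Pwtb; rewrite -catA => /(suffix_closed feP).
  + by rewrite catA.
have shrink_right s : right_ext P l.+1 w s /\ take l s = t ->
    right_ext P 1 (w ++ t) (drop l s).
  move=> [[szs [Ps Pws]] st]; split; first by rewrite size_drop szs subSnn.
  split; first by apply: (suffix_closed feP (u := take l s)); rewrite cat_take_drop.
  by rewrite -catA -st cat_take_drop.
apply: (bipartite_iso (fl := id) (gl := id)) => //.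
- by move=> b _; rewrite -szt drop_size_cat.
- by move=> s [_ <-]; rewrite cat_take_drop.
- move=> u b /grow_left [Lu _] /grow_right [Rtb _] [_ [_ Puwtb]].
  by do 2!split=> //; rewrite -catA in Puwtb.
- move=> u s /shrink_left Lu Rs [_ [_ Puws]]; have [_ st] := Rs.
  do 2!split=> //; first exact: shrink_right.
  by rewrite -catA -st cat_take_drop.
Qed.

Let fibers_have (Phi : graph (seq A + seq A) -> Prop) l :=
  forall t, right_ext P l w t -> Phi (lr_ext_graph P k 1 (w ++ t)).

Lemma all_reachable_ext_succ l : all_reachable (lr_ext_graph P k l w) ->
  fibers_have (@all_reachable _) l -> all_reachable (lr_ext_graph P k l.+1 w).
Proof.
move=> conG conF; apply: (all_reachable_lift (@ext_edge_vert l) (@ext_edge_vert l.+1)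
  (@ext_edge_lift l) (@right_ext_edge l.+1) conG).
by move=> t Rt; apply: all_reachable_iso (fiber_ext_iso Rt) (conF t Rt).
Qed.

Lemma forest_ext_succ l : forest (lr_ext_graph P k l w) ->
  fibers_have (@forest _) l -> forest (lr_ext_graph P k l.+1 w).
Proof.
move=> forG forF; apply: (forest_lift (@ext_edge_vert l) (@ext_edge_vert l.+1)
  (@ext_edge_take l) (@right_ext_take l) forG).
by move=> t Rt; apply: forest_iso (fiber_ext_iso Rt) (forF t Rt).
Qed.

Lemma all_reachable_ext_pred l :
  all_reachable (lr_ext_graph P k l.+1 w) -> all_reachable (lr_ext_graph P k l w).
Proof.
exact: (all_reachable_proj (@ext_edge_vert l) (@ext_edge_take l) (@right_ext_take l)
  (@right_ext_edge l)).
Qed.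

Lemma forest_ext_pred l : forest (lr_ext_graph P k l.+1 w) ->
  fibers_have (@all_reachable _) l -> forest (lr_ext_graph P k l w).
Proof.
move=> forG conF; apply: (forest_proj (@ext_edge_vert l) (@ext_edge_vert l.+1)
  (@ext_edge_lift l) forG).
by move=> t Rt; apply: all_reachable_iso (fiber_ext_iso Rt) (conF t Rt).
Qed.

End OneSideGrowth.

Definition rev_lang P s := P (rev s).

Lemma factorial_extendable_rev P :
  factorial_extendable P -> factorial_extendable (rev_lang P).
Proof.
case=> pre suf extl extr; split; rewrite /rev_lang.
- by move=> u v; rewrite rev_cat => /suf.
- by move=> u v; rewrite rev_cat => /pre.
- move=> w n /(extr _ n) [v szv Pwv]; exists (rev v); first by rewrite size_rev.
  by rewrite rev_cat revK.
- move=> w n /(extl _ n) [u szu Puw]; exists (rev u); first by rewrite size_rev.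
  by rewrite rev_cat revK.
Qed.

Lemma left_ext_rev P k w u :
  right_ext (rev_lang P) k (rev w) (rev u) = left_ext P k w u.
Proof. by rewrite /right_ext /left_ext /rev_lang size_rev -rev_cat !revK. Qed.

Lemma right_ext_rev P l w v :
  left_ext (rev_lang P) l (rev w) (rev v) = right_ext P l w v.
Proof. by rewrite /right_ext /left_ext /rev_lang size_rev -rev_cat !revK. Qed.

Lemma ext_edge_rev P k l w u v :
  ext_edge (rev_lang P) l k (rev w) (rev v) (rev u) <-> ext_edge P k l w u v.
Proof.
rewrite /ext_edge left_ext_rev right_ext_rev /rev_lang -rev_cat -rev_cat revK -catA.
tauto.
Qed.

Lemma lr_ext_graph_rev P k l w :
  isomorphic (lr_ext_graph P k l w) (lr_ext_graph (rev_lang P) l k (rev w)).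
Proof.
do 2!eexists; apply: graph_iso_trans (bipartite_flip_iso _ _ _) _.
apply: (bipartite_iso (fl := @rev A) (gl := @rev A) (fr := @rev A) (gr := @rev A)).
- by move=> v; rewrite right_ext_rev.
- by move=> v; rewrite -{1}(revK v) right_ext_rev.
- by move=> u; rewrite left_ext_rev.
- by move=> u; rewrite -{1}(revK u) left_ext_rev.
1-4: by move=> *; rewrite revK.
- by move=> v u _ _ /ext_edge_rev.
- by move=> v u _ _; rewrite -(revK u) -(revK v) => /ext_edge_rev; rewrite !revK.
Qed.

End ExtensionGraphs.

Lemma nat_descend (F : nat -> Prop) : (forall j, F j.+1 -> F j) ->
  forall i j, i <= j -> F j -> F i.
Proof.
move=> Fdown i j /subnKC <-; elim: (j - i) => [|d IH]; first by rewrite addn0.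
by rewrite addnS => /Fdown /IH.
Qed.

(** * Changing the context lengths *)

Section Levels.
Variables (A : Type) (m : nat).
Implicit Types (P : seq A -> Prop) (Phi : graph (seq A + seq A) -> Prop).

Definition all_ext_graphs Phi P k l :=
  forall w, P w -> m <= size w -> Phi (lr_ext_graph P k l w).

Definition iso_invariant Phi := forall G G', isomorphic G G' -> Phi G -> Phi G'.

Lemma all_reachable_iso_invariant : iso_invariant (@all_reachable _).
Proof. by move=> G G' [f [g iso]]; apply: all_reachable_iso iso. Qed.

Lemma forest_iso_invariant : iso_invariant (@forest _).
Proof. by move=> G G' [f [g iso]]; apply: forest_iso iso. Qed.

Lemma tree_iso_invariant : iso_invariant (@tree _).
Proof. by move=> G G' [f [g iso]]; apply: tree_iso iso. Qed.

Lemma all_ext_graphs_rev Phi : iso_invariant Phi -> forall P k l,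
  all_ext_graphs Phi (rev_lang P) l k <-> all_ext_graphs Phi P k l.
Proof.
move=> invPhi P k l; split=> H w Pw mw.
- apply: invPhi (isomorphic_sym (lr_ext_graph_rev _ _ _ _)) _.
  by apply: H; rewrite /rev_lang ?revK ?size_rev.
- rewrite -(revK w); apply: invPhi (lr_ext_graph_rev _ _ _ _) _.
  by apply: H; rewrite ?size_rev.
Qed.

Section Language.
Variables (P : seq A -> Prop) (feP : factorial_extendable P).

Lemma lr_ext_graph_nonempty k l w : P w -> exists x, vert (lr_ext_graph P k l w) x.
Proof.
move=> Pw; have [u szu Puw] := left_extendable feP k Pw.
by exists (inl u); do !split=> //; apply: prefix_closed Puw.
Qed.

Lemma long_right_ext w l t : m <= size w -> right_ext P l w t -> m <= size (w ++ t).
Proof. by move=> mw _; rewrite size_cat (leq_trans mw (leq_addr _ _)). Qed.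

Lemma all_ext_trees_succ k l : all_ext_graphs (@tree _) P k l ->
  all_ext_graphs (@tree _) P k 1 -> all_ext_graphs (@tree _) P k l.+1.
Proof.
move=> Tkl Tk1 w Pw mw; have [_ [conG forG]] := Tkl w Pw mw.
have Tk1_ext t : right_ext P l w t -> tree (lr_ext_graph P k 1 (w ++ t)).
  by move=> Rt; apply: Tk1; [case: Rt => _ [] | exact: long_right_ext Rt].
split; first exact: lr_ext_graph_nonempty.
split.
- by apply: all_reachable_ext_succ => // t /Tk1_ext [_ []].
- by apply: forest_ext_succ => // t /Tk1_ext [_ []].
Qed.

Lemma all_reachable_ext_pred_r k l :
  all_ext_graphs (@all_reachable _) P k l.+1 -> all_ext_graphs (@all_reachable _) P k l.
Proof. by move=> conP w Pw mw; apply: all_reachable_ext_pred => //; apply: conP. Qed.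

Lemma forest_ext_pred_r k l :
  all_ext_graphs (@forest _) P k l.+1 -> all_ext_graphs (@all_reachable _) P k 1 ->
  all_ext_graphs (@forest _) P k l.
Proof.
move=> forP conP w Pw mw; apply: forest_ext_pred => //; first exact: forP.
by move=> t Rt; apply: conP; [case: Rt => _ [] | exact: long_right_ext Rt].
Qed.

End Language.

Lemma all_ext_trees_of_base P : factorial_extendable P ->
  all_ext_graphs (@tree _) P 1 1 -> forall k l, all_ext_graphs (@tree _) P k.+1 l.+1.
Proof.
move=> feP T11; have feR := factorial_extendable_rev feP.
have revT := all_ext_graphs_rev tree_iso_invariant.
have T1 l : all_ext_graphs (@tree _) P 1 l.+1.
  by elim: l => // l IH; apply: all_ext_trees_succ.
elim=> // k IH l; apply/revT.
by apply: all_ext_trees_succ => //; apply/revT.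
Qed.

Lemma base_of_ext_trees P n : factorial_extendable P ->
  all_ext_graphs (@tree _) P n.+1 n.+1 -> all_ext_graphs (@tree _) P 1 1.
Proof.
move=> feP Tn; have feR := factorial_extendable_rev feP.
have revC := all_ext_graphs_rev all_reachable_iso_invariant.
have revF := all_ext_graphs_rev forest_iso_invariant.
have [Cn Fn] : all_ext_graphs (@all_reachable _) P n.+1 n.+1 /\
    all_ext_graphs (@forest _) P n.+1 n.+1.
  by split=> w Pw mw; case: (Tn w Pw mw) => _ [].
have C1n : all_ext_graphs (@all_reachable _) P 1 n.+1.
  apply: (nat_descend (F := fun j => all_ext_graphs _ P j n.+1)) Cn => // j.
  by move=> /(iffRL (revC P _ _)) /(all_reachable_ext_pred_r feR) /revC.
have C11 : all_ext_graphs (@all_reachable _) P 1 1.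
  apply: (nat_descend (F := all_ext_graphs _ P 1)) C1n => // j.
  exact: all_reachable_ext_pred_r.
have F1n : all_ext_graphs (@forest _) P 1 n.+1.
  apply: (nat_descend (F := fun j => all_ext_graphs _ P j n.+1)) Fn => // j.
  move=> /(iffRL (revF P _ _)) /(forest_ext_pred_r feR) FR; apply/revF.
  by apply: FR; apply/revC.
have F11 : all_ext_graphs (@forest _) P 1 1.
  apply: (nat_descend (F := all_ext_graphs _ P 1)) F1n => // j Fj.
  exact: forest_ext_pred_r.
move=> w Pw mw; split; first exact: lr_ext_graph_nonempty.
by split; [apply: C11|apply: F11].
Qed.

End Levels.

(** * The language of a shift space *)

Section ShiftLanguage.
Variables (A : finType) (X : config A -> Prop).

Lemma window_cat (x : config A) i a b :
  window x i (a + b) = window x i a ++ window x (i + a%:Z)%R b.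
Proof.
rewrite /window /mkseq iotaD map_cat add0n; congr (_ ++ _).
rewrite -{1}(addn0 a) iotaDl -map_comp; apply: eq_map => j /=.
by rewrite PoszD GRing.addrA.
Qed.

Lemma lang_cat_split u v :
  lang X (u ++ v) -> exists x i, [/\ X x, u = window x i (size u)
    & v = window x (i + (size u)%:Z)%R (size v)].
Proof.
case=> x [i [Xx]]; rewrite size_cat window_cat => /eqP.
by rewrite eqseq_cat ?size_mkseq // => /andP [/eqP uE /eqP vE]; exists x, i.
Qed.

Lemma lang_factorial_extendable : factorial_extendable (lang X).
Proof.
split.
- by move=> u v /lang_cat_split [x [i [Xx uE _]]]; exists x, i.
- by move=> u v /lang_cat_split [x [i [Xx _ vE]]]; exists x, (i + (size u)%:Z)%R.
- move=> w n [x [i [Xx wE]]]; exists (window x (i - n%:Z)%R n); first exact: size_mkseq.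
  exists x, (i - n%:Z)%R; split=> //.
  by rewrite size_cat size_mkseq window_cat GRing.subrK -wE.
- move=> w n [x [i [Xx wE]]]; exists (window x (i + (size w)%:Z)%R n).
    exact: size_mkseq.
  by exists x, i; split=> //; rewrite size_cat size_mkseq window_cat -wE.
Qed.

Lemma ext_trees_iff m n :
  (forall w, lang_ge X m w -> is_tree (ext_graph X n w)) <->
  all_ext_graphs m (@tree _) (lang X) n n.
Proof.
have treeE w : is_tree (ext_graph X n w) <-> tree (lr_ext_graph (lang X) n n w).
  by apply: is_tree_iff_tree; [exact: bipartite_sym|exact: bipartite_irr].
by split=> [T w Lw mw|T w [Lw mw]]; apply/treeE; apply: T.
Qed.

End ShiftLanguage.

Theorem mainTheorem17 (A : finType) (X : config A -> Prop) (m : nat) :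
  shift_space X -> 1 <= m ->
  [<-> eventually_dendric X m;
       forall n, 1 <= n -> forall w, lang_ge X m w -> is_tree (ext_graph X n w);
       exists n, 1 <= n /\ forall w, lang_ge X m w -> is_tree (ext_graph X n w)].
Proof.
move=> _ _; have feX := lang_factorial_extendable X.
tfae.
- move=> /ext_trees_iff base [|k] // _; apply/ext_trees_iff.
  exact: (all_ext_trees_of_base feX base).
- by move=> trees; exists 1; split=> //; apply: trees.
- case=> -[|n] [// _ /ext_trees_iff trees]; apply/ext_trees_iff.
  exact: base_of_ext_trees feX trees.
Qed.
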